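(* For any RES-graph $(G,\gamma,b)$, any shifting $\gamma'$ of $\gamma$, and any set of vertices $X$ with $b\in X$, $$\tilde{\nu}(G,\gamma,b)\le \gamma'(E(X))+\tfrac12|\delta(X)|-\mathrm{odd}_{\gamma'}(G-X).$$
   Context: Graphs are finite and may have loops and multiple edges. Each edge consists of two half-edges; each half-edge is incident to a vertex, and a loop has both half-edges at the same vertex, so it contributes $2$ to that vertex's degree. An arc is an ordered pair $(h_1,h_2)$ of half-edges forming an edge; its tail is the vertex of $h_1$ and its head is the vertex of $h_2$. A trail is a sequence of arcs whose edges are pairwise distinct and such that the head of each arc (other than the last) is the tail of the next. A circuit is a trail whose head equals its tail. A circuit hits a vertex $v$ if it contains an arc incident to $v$. A circuit-decomposition of $G$ is a collection of circuits such that every edge of $G$ is used by exactly one circuit of the collection. A graph is Eulerian if it is connected and every vertex has even degree. A signature of $G$ is a function $\gamma:E(G)\to\mathbb{Z}_2$. The weight of a trail is the sum in $\mathbb{Z}_2$ of $\gamma$ over its edges, and a trail (or edge) is zero or non-zero according to its weight. Shifting at a vertex $v$ means adding $1$ to the weight of every non-loop edge incident to $v$. A shifting of $\gamma$ is any signature obtainable from $\gamma$ by a sequence of shiftings at vertices. An RES-graph is a triple $(G,\gamma,b)$ where $G$ is an Eulerian graph, $\gamma$ is a signature of $G$, and $b\in V(G)$. The flooding number $\tilde{\nu}(G,\gamma,b)$ is the maximum size of a circuit-decomposition of $G$ in which every circuit is non-zero and hits $b$; it is $0$ if no such decomposition exists. For $X\subseteq V(G)$, $E(X)$ is the set of edges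 with both ends in $X$, and $\delta(X)$ is the set of edges with exactly one end in $X$. For an edge set $F$, $\gamma'(F)$ denotes the number of edges of $F$ with weight $1$ under $\gamma'$. A vertex set $Y$ is $\gamma'$-odd if the parity of $\gamma'(E(Y)\cup\delta(Y))$ differs from the parity of $|\delta(Y)|/2$. Finally, $\mathrm{odd}_{\gamma'}(G-X)$ is the number of components of $G-X$ whose vertex set is $\gamma'$-odd. *)

From mathcomp Require Import all_boot all_algebra.
From Stdlib Require Import ClassicalEpsilon.
Set Implicit Arguments. Unset Strict Implicit. Unset Printing Implicit Defensive.
Import GRing.Theory.

(* A finite multigraph (loops and parallel edges allowed): vertex type V,
   edge type E, and [ends e = (u, v)] the vertices of the two half-edges of
   e.  Half-edge (e, false) sits at (ends e).1, half-edge (e, true) at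
   (ends e).2.  A loop is an edge with (ends e).1 = (ends e).2. *)

Section Graphs.
Variables (V E : finType) (ends : E -> V * V).

Definition is_loop (e : E) : bool := (ends e).1 == (ends e).2.

Definition deg (v : V) : nat :=
  \sum_(e : E) (((ends e).1 == v) + ((ends e).2 == v)).

Definition adj (u v : V) : bool :=
  [exists e : E, (ends e == (u, v)) || (ends e == (v, u))].

Definition connected_graph : Prop := forall u v : V, connect adj u v.

Definition eulerian : Prop := connected_graph /\ forall v : V, ~~ odd (deg v).

(* An arc is an ordered pair of the two half-edges of an edge; it is encoded
   as (e, d): d = false means (h1,h2) = ((e,false),(e,true)),
   d = true means (h1,h2) = ((e,true),(e,false)). *)
Definition arc := (E * bool)%type.
Definition tail (a : arc) : V := if a.2 then (ends a.1).2 else (ends a.1).1.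
Definition head (a : arc) : V := if a.2 then (ends a.1).1 else (ends a.1).2.

Definition trail (t : seq arc) : bool :=
  uniq (map fst t) &&
  (if t is a :: t' then path (fun x y => head x == tail y) a t' else true).

Definition circuit (t : seq arc) : bool :=
  trail t &&
  (if t is a :: t' then head (last a t') == tail a else false).

Definition hits (v : V) (t : seq arc) : bool :=
  has (fun a => (tail a == v) || (head a == v)) t.

Definition signature := E -> 'Z_2.

Definition weight (g : signature) (t : seq arc) : 'Z_2 :=
  (\sum_(a <- t) g a.1)%R.

Definition shift_at (v : V) (g : signature) : signature :=
  fun e => if ~~ is_loop e && (((ends e).1 == v) || ((ends e).2 == v))
           then (g e + 1)%R else g e.

Definition is_shifting (g g' : signature) : Prop :=
  exists s : seq V, g' =1 foldl (fun h v => shift_at v h) g s.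

Definition flooding_decomp (g : signature) (b : V) (D : seq (seq arc)) : Prop :=
  (forall c, c \in D -> [/\ circuit c, weight g c != 0%R & hits b c]) /\
  (forall e : E, count (fun c => e \in map fst c) D = 1%N).

Definition pbool (P : Prop) : bool :=
  if excluded_middle_informative P then true else false.

(* flooding number: maximum size of such a decomposition, 0 if none.
   Every such decomposition has at most #|E| circuits (circuits are nonempty
   and edge-disjoint), so the maximum is taken over k <= #|E|. *)
Definition flooding_number (g : signature) (b : V) : nat :=
  \max_(k < #|E|.+1 | pbool (exists D, flooding_decomp g b D /\ size D = k)) k.

Definition Ein (X : {set V}) : {set E} :=
  [set e | ((ends e).1 \in X) && ((ends e).2 \in X)].
Definition delta (X : {set V}) : {set E} :=
  [set e | ((ends e).1 \in X) != ((ends e).2 \in X)].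

Definition gcount (g : signature) (F : {set E}) : nat :=
  #|[set e in F | g e == 1%R]|.

Definition odd_set (g : signature) (Y : {set V}) : bool :=
  odd (gcount g (Ein Y :|: delta Y)) != odd (#|delta Y| ./2).

Definition adj_minus (X : {set V}) (u v : V) : bool :=
  (u \notin X) && (v \notin X) && adj u v.

Definition component_minus (X : {set V}) (Y : {set V}) : bool :=
  [exists u : V, (u \notin X) && (Y == [set v | connect (adj_minus X) u v])].

Definition odd_comp (g : signature) (X : {set V}) : nat :=
  #|[set Y : {set V} | component_minus X Y && odd_set g Y]|.

End Graphs.

(* Fix a shifting g' of g, a vertex set X containing b, and a decomposition D
   of G into non-zero circuits through b.  Shifting does not change the weight
   of a circuit (a circuit uses an even number of non-loop edges at each
   vertex), so each circuit of D uses an odd number of edges of g'-weight 1.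
   Such an edge lies in E(X) or is incident with exactly one component Y of
   G - X.  A circuit c crosses delta(Y) an even number 2k of times; c earns
   the credit k or k - 1 at Y, chosen to have the parity of the number of
   weight-1 edges of c incident with Y (a circuit through b that never
   crosses delta(Y) does not touch Y, so k = 0 forces credit 0).  Hence every
   circuit earns a positive total credit, while summed over D the credits at
   Y fall short of |delta(Y)|/2 by one whenever Y is g'-odd.  Summing over the
   components yields |D| + odd(G - X) <= g'(E(X)) + |delta(X)|/2.  When no
   decomposition exists we still need odd(G - X) <= |delta(X)|/2, which holds
   because in an Eulerian graph every component of G - X is left by a
   positive even number of edges. *)

From Pilot Require Import Defs.
From mathcomp Require Import all_boot all_algebra zify.
From Stdlib Require Import ClassicalEpsilon.
Set Implicit Arguments. Unset Strict Implicit. Unset Printing Implicit Defensive.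

Lemma count_sum (T : Type) (p : pred T) (s : seq T) :
  count p s = \sum_(x <- s) (p x : nat).
Proof. by rewrite -sum1_count big_mkcond. Qed.

Lemma card_indicator (T : finType) (A : {pred T}) :
  #|A| = \sum_(x : T) (x \in A : nat).
Proof. by rewrite -sum1_card big_mkcond. Qed.

Lemma sum_eq_indicator (T : finType) (x : T) (Y : {set T}) :
  \sum_(v in Y) (x == v : nat) = (x \in Y).
Proof.
case: (boolP (x \in Y)) => xY; last first.
  by rewrite big1 // => v vY; case: eqP => // xv; rewrite xv vY in xY.
rewrite (bigD1 x) //= eqxx big1 ?addn0 // => v /andP[_ neq].
by rewrite eq_sym (negbTE neq).
Qed.

Lemma odd_sum (I : Type) (r : seq I) (P : pred I) (F : I -> nat) :
  odd (\sum_(i <- r | P i) F i) = \big[addb/false]_(i <- r | P i) odd (F i).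
Proof. exact: (big_morph odd oddD). Qed.

Lemma eq_odd_sum (I : Type) (r : seq I) (P : pred I) (F G : I -> nat) :
  (forall i, P i -> odd (F i) = odd (G i)) ->
  odd (\sum_(i <- r | P i) F i) = odd (\sum_(i <- r | P i) G i).
Proof. by move=> FG; rewrite !odd_sum; apply: eq_bigr. Qed.

Lemma odd_sum_mismatch (I : Type) (r : seq I) (F G : I -> nat) :
  odd (\sum_(i <- r) (odd (F i) != odd (G i) : nat)) =
  (odd (\sum_(i <- r) F i) != odd (\sum_(i <- r) G i)).
Proof.
rewrite !odd_sum negb_eqb -big_split /=.
by apply: eq_bigr => i _; case: (odd (F i)); case: (odd (G i)).
Qed.

Lemma half_sum (I : Type) (r : seq I) (P : pred I) (F : I -> nat) :
  (forall i, P i -> ~~ odd (F i)) ->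
  (\sum_(i <- r | P i) F i)./2 = \sum_(i <- r | P i) (F i)./2.
Proof.
move=> even_F; rewrite (eq_bigr (fun i => (F i)./2 + (F i)./2)).
  by rewrite big_split /= addnn doubleK.
by move=> i Pi; rewrite addnn -[LHS]odd_double_half (negbTE (even_F i Pi)).
Qed.

Lemma sum_half_le (I : Type) (r : seq I) (P : pred I) (F : I -> nat) :
  \sum_(i <- r | P i) (F i)./2 <= (\sum_(i <- r | P i) F i)./2.
Proof.
elim/big_rec2: _ => // i m n _ le_mn.
by rewrite halfD (leq_trans _ (leq_addl _ _)) // leq_add2l.
Qed.

Section EdgeCounts.
Variable E : finType.

Definition uses (A : {set E}) (c : seq (Defs.arc E)) : nat :=
  count (fun x => x.1 \in A) c.

Lemma decomp_uses (D : seq (seq (Defs.arc E))) (A : {set E}) :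
  (forall c, c \in D -> uniq (map fst c)) ->
  (forall e, count (fun c => e \in map fst c) D = 1) ->
  \sum_(c <- D) uses A c = #|A|.
Proof.
move=> uniq_D once_D.
transitivity (\sum_(c <- D) \sum_e ((e \in map fst c) * (e \in A))).
  rewrite !big_seq; apply: eq_bigr => c cD.
  rewrite /uses -(count_map fst (mem A)) count_sum big_uniq ?uniq_D //=.
  by rewrite big_mkcond; apply: eq_bigr => e _; case: (e \in map fst c); rewrite ?mul1n.
rewrite exchange_big card_indicator; apply: eq_bigr => e _.
by rewrite -big_distrl /= -count_sum once_D mul1n.
Qed.

End EdgeCounts.

Section Circuits.
Variables (V E : finType) (ends : E -> V * V).
Local Notation tl := (@Defs.tail V E ends).
Local Notation hd := (@Defs.head V E ends).

Lemma walk_tail_head_sum (f : V -> nat) a t :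
  path (fun x y => hd x == tl y) a t ->
  \sum_(x <- a :: t) f (tl x) + f (hd (last a t)) =
  f (tl a) + \sum_(x <- a :: t) f (hd x).
Proof.
elim: t a => [|a' t IH] a /=; first by rewrite !big_seq1 addnC.
case/andP => /eqP hd_a walk_t.
by rewrite big_cons -addnA IH // !big_cons hd_a.
Qed.

Lemma circuit_tail_head_sum (f : V -> nat) c : circuit ends c ->
  \sum_(x <- c) f (tl x) = \sum_(x <- c) f (hd x).
Proof.
case: c => [|a t] //= /andP[/andP[_ walk_t] /eqP closed_c].
by have := walk_tail_head_sum f walk_t; rewrite closed_c addnC => /addnI.
Qed.

Lemma circuit_ends_even (f : V -> nat) c : circuit ends c ->
  ~~ odd (\sum_(x <- c) (f (ends x.1).1 + f (ends x.1).2)).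
Proof.
move=> circ_c.
rewrite (eq_bigr (fun x => f (tl x) + f (hd x))); last first.
  by move=> [e []] _; rewrite /Defs.tail /Defs.head //= addnC.
by rewrite big_split /= circuit_tail_head_sum // addnn odd_double.
Qed.

End Circuits.

Section Shifting.
Import GRing.Theory.
Variables (V E : finType) (ends : E -> V * V).

Lemma z2_nat (x : 'Z_2) : x = ((x == 1%R)%:R)%R.
Proof. by case: x => [[|[|i]] lt_i2] //; apply/val_inj. Qed.

Lemma natr_z2_eq0 n : ((n%:R)%R == 0 :> 'Z_2)%R = ~~ odd n.
Proof.
rewrite Zp_nat; apply/eqP/idP => [/(congr1 val) /=|even_n].
  by rewrite modn2; case: (odd n).
by apply/val_inj => /=; rewrite modn2 (negbTE even_n).
Qed.

Lemma weight_count (h : signature E) c :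
  weight h c = ((count (fun x => h x.1 == 1%R) c)%:R)%R.
Proof. by rewrite /weight count_sum natr_sum; apply: eq_bigr => x _; apply: z2_nat. Qed.

Lemma weight_neq0 (h : signature E) c :
  (weight h c != 0%R) = odd (count (fun x => h x.1 == 1%R) c).
Proof. by rewrite weight_count natr_z2_eq0 negbK. Qed.

(* A circuit uses an even number of non-loop edges at any vertex v (counted
   with multiplicity of occurrence as arcs), since loops at v contribute 2 to
   the count of ends at v. *)
Lemma circuit_nonloop_even v c : circuit ends c ->
  ~~ odd (count (fun x => ~~ is_loop ends x.1 &&
                          (((ends x.1).1 == v) || ((ends x.1).2 == v))) c).
Proof.
move=> circ_c; have := circuit_ends_even (fun u => (u == v) : nat) circ_c.
set nonloop := fun x : Defs.arc E => _ && _.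
pose loop_at (x : Defs.arc E) := is_loop ends x.1 && ((ends x.1).1 == v).
rewrite (eq_bigr (fun x => nonloop x + (loop_at x + loop_at x))); last first.
  move=> x _; rewrite /nonloop /loop_at /is_loop; case: (ends x.1) => u w /=.
  case: (eqVneq u w) => [<-|uw]; first by case: (u == v).
  by case: (eqVneq u v) => uv; case: (eqVneq w v) => wv //; move: uw; rewrite uv wv eqxx.
by rewrite !big_split /= addnn oddD odd_double addbF -count_sum.
Qed.

Lemma shift_at_weight v (h : signature E) c : circuit ends c ->
  weight (shift_at ends v h) c = weight h c.
Proof.
move=> circ_c; have := circuit_nonloop_even v circ_c.
rewrite -natr_z2_eq0 => /eqP nonloop0.
rewrite -[RHS]addr0 -{}nonloop0 /weight count_sum natr_sum -big_split /=.
by apply: eq_bigr => x _; rewrite /shift_at; case: ifP; rewrite ?addr0.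
Qed.

Lemma shifting_weight (g g' : signature E) c :
  is_shifting ends g g' -> circuit ends c -> weight g' c = weight g c.
Proof.
move=> [s g'_def] circ_c.
have -> : weight g' c = weight (foldl (fun h v => shift_at ends v h) g s) c.
  by apply: eq_bigr => x _; rewrite g'_def.
by elim: s g {g'_def} => [|v s IH] g //=; rewrite IH shift_at_weight.
Qed.

End Shifting.

Section Components.
Variables (V E : finType) (ends : E -> V * V) (X : {set V}).

Definition incident (Y : {set V}) : {set E} :=
  [set e | ((ends e).1 \in Y) || ((ends e).2 \in Y)].

Lemma incident_Ein_delta Y : incident Y = Ein ends Y :|: delta ends Y.
Proof.
by apply/setP => e; rewrite !inE; case: ((ends e).1 \in Y); case: ((ends e).2 \in Y).
Qed.

Lemma adj_minus_sym : symmetric (adj_minus ends X).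
Proof.
move=> u v; rewrite /adj_minus [(u \notin X) && _]andbC; congr (_ && _).
by apply/existsP/existsP => -[e e_uv]; exists e; rewrite orbC.
Qed.

Definition comp (u : V) : {set V} := [set v | connect (adj_minus ends X) u v].
Definition comps : {set {set V}} := [set Y | component_minus ends X Y].

Lemma comp_self u : u \in comp u.
Proof. by rewrite inE connect0. Qed.

Lemma comp_in_comps u : u \notin X -> comp u \in comps.
Proof. by move=> uX; rewrite inE; apply/existsP; exists u; rewrite uX eqxx. Qed.

Lemma comps_comp Y : Y \in comps -> exists2 u, u \notin X & Y = comp u.
Proof. by rewrite inE => /existsP[u /andP[uX /eqP ->]]; exists u. Qed.

Lemma comps_notX Y v : Y \in comps -> v \in Y -> v \notin X.
Proof.
have closed_notX : closed (adj_minus ends X) [predC X].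
  by move=> x y /andP[/andP[xX yX] _]; rewrite !inE xX yX.
case/comps_comp => u uX ->; rewrite inE => /(closed_connect closed_notX).
by rewrite !inE => <-.
Qed.

Lemma comps_eq_comp Y v : Y \in comps -> v \in Y -> Y = comp v.
Proof.
case/comps_comp => u _ ->; rewrite inE => uv.
by apply/setP => w; rewrite !inE (same_connect (sym_connect_sym adj_minus_sym) uv).
Qed.

Lemma comps_cover v : \sum_(Y in comps) (v \in Y : nat) = (v \notin X).
Proof.
case: (boolP (v \in X)) => [vX|vX].
  by rewrite big1 // => Y YC; case: (boolP (v \in Y)) => // /(comps_notX YC); rewrite vX.
rewrite (bigD1 (comp v)) ?comp_in_comps //= comp_self big1 // => Y /andP[YC neq].
by case: (boolP (v \in Y)) => // vY; rewrite -(comps_eq_comp YC vY) eqxx in neq.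
Qed.

Lemma comps_edge Y e : Y \in comps ->
  (ends e).1 \notin X -> (ends e).2 \notin X ->
  ((ends e).1 \in Y) = ((ends e).2 \in Y).
Proof.
case/comps_comp => u _ -> e1X e2X; rewrite !inE.
apply: same_connect_r; first exact: sym_connect_sym adj_minus_sym.
apply: connect1; rewrite /adj_minus e1X e2X /=.
by apply/existsP; exists e; rewrite -surjective_pairing eqxx.
Qed.

(* The end of e that is used to locate e among the components. *)
Definition outer_end (e : E) : V :=
  if (ends e).1 \in X then (ends e).2 else (ends e).1.

Lemma outer_end_in_X e : (outer_end e \in X) = (e \in Ein ends X).
Proof. by rewrite /outer_end inE; case: ifP. Qed.

Lemma incident_outer_end Y e : Y \in comps -> (e \in incident Y) = (outer_end e \in Y).
Proof.
move=> YC; rewrite inE /outer_end.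
case e1X: ((ends e).1 \in X).
  by case e1Y: ((ends e).1 \in Y) => //; move: (comps_notX YC e1Y); rewrite e1X.
case e1Y: ((ends e).1 \in Y) => //=.
case e2Y: ((ends e).2 \in Y) => //.
by move: e1Y; rewrite (comps_edge YC) ?e1X ?e2Y ?(comps_notX YC e2Y).
Qed.

Lemma incident_partition e :
  \sum_(Y in comps) (e \in incident Y : nat) = (e \notin Ein ends X).
Proof.
rewrite -outer_end_in_X -comps_cover; apply: eq_bigr => Y YC.
by rewrite incident_outer_end.
Qed.

Lemma comps_delta Y e : Y \in comps ->
  (e \in delta ends Y) = (e \in incident Y) && (e \in delta ends X).
Proof.
move=> YC; rewrite !inE.
case e1Y: ((ends e).1 \in Y); case e2Y: ((ends e).2 \in Y);
  case e1X: ((ends e).1 \in X); case e2X: ((ends e).2 \in X) => //=.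
all: by [ move: (comps_notX YC e1Y); rewrite e1X
        | move: (comps_notX YC e2Y); rewrite e2X
        | move: e1Y; rewrite (comps_edge YC) ?e1X ?e2X ?e2Y ].
Qed.

Lemma delta_partition e :
  \sum_(Y in comps) (e \in delta ends Y : nat) = (e \in delta ends X).
Proof.
under eq_bigr => Y YC do rewrite comps_delta // -mulnb.
rewrite -big_distrl /= incident_partition.
by rewrite !inE; case: ((ends e).1 \in X); case: ((ends e).2 \in X).
Qed.

Lemma sum_card_delta : \sum_(Y in comps) #|delta ends Y| = #|delta ends X|.
Proof.
under eq_bigr => Y _ do rewrite card_indicator.
by rewrite exchange_big card_indicator; apply: eq_bigr => e _; apply: delta_partition.
Qed.

Lemma count_split (q : pred E) (c : seq (Defs.arc E)) :
  count (fun x => q x.1) c =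
  uses [set e in Ein ends X | q e] c +
  \sum_(Y in comps) uses [set e in incident Y | q e] c.
Proof.
have usesE (A : {set E}) :
    uses [set e in A | q e] c = count (fun x => (x.1 \in A) && q x.1) c.
  by apply: eq_count => x; rewrite inE.
rewrite usesE; under eq_bigr do rewrite usesE count_sum.
rewrite !count_sum exchange_big -big_split /=; apply: eq_bigr => x _.
case: (q x.1); last by rewrite andbF big1 // => Y _; rewrite andbF.
under eq_bigr do rewrite andbT.
by rewrite andbT incident_partition; case: (x.1 \in Ein ends X).
Qed.

End Components.

Section DegreeParity.
Variables (V E : finType) (ends : E -> V * V).

Lemma sum_deg (Y : {set V}) :
  \sum_(v in Y) deg ends v = #|delta ends Y| + (#|Ein ends Y| + #|Ein ends Y|).
Proof.
rewrite /deg exchange_big /= !card_indicator -!big_split /=.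
apply: eq_bigr => e _; rewrite big_split /= !sum_eq_indicator !inE.
by case: ((ends e).1 \in Y); case: ((ends e).2 \in Y).
Qed.

Lemma delta_even (Y : {set V}) : (forall v, ~~ odd (deg ends v)) ->
  ~~ odd #|delta ends Y|.
Proof.
move=> even_deg; have : ~~ odd (\sum_(v in Y) deg ends v).
  by rewrite odd_sum big1_idem //= => v _; apply/negbTE.
by rewrite sum_deg oddD addnn odd_double addbF.
Qed.

Lemma connected_delta_pos (Y : {set V}) u w : connected_graph ends ->
  u \in Y -> w \notin Y -> 0 < #|delta ends Y|.
Proof.
move=> conn uY wY; rewrite card_gt0; apply: contraNneq wY => no_delta.
have closedY : closed (adj ends) Y.
  move=> x y /existsP[e ends_e]; have : e \notin delta ends Y by rewrite no_delta inE.
  by rewrite inE negbK; case/orP: ends_e => /eqP -> /eqP.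
by rewrite -(closed_connect closedY (conn u w)).
Qed.

End DegreeParity.

Section Crossings.
Variables (V E : finType) (ends : E -> V * V) (Y : {set V}).
Local Notation tl := (@Defs.tail V E ends).
Local Notation hd := (@Defs.head V E ends).

Lemma arc_crosses (x : Defs.arc E) :
  (x.1 \in delta ends Y) = ((tl x \in Y) != (hd x \in Y)).
Proof. by case: x => e [] /=; rewrite inE /Defs.tail /Defs.head //= eq_sym. Qed.

Lemma arc_incident (x : Defs.arc E) :
  (x.1 \in incident ends Y) = ((tl x \in Y) || (hd x \in Y)).
Proof. by case: x => e [] /=; rewrite inE /Defs.tail /Defs.head //= orbC. Qed.

Lemma walk_one_side a t : path (fun x y => hd x == tl y) a t ->
  ~~ has (fun x => x.1 \in delta ends Y) (a :: t) ->
  all (fun x => ((tl x \in Y) == (tl a \in Y)) && ((hd x \in Y) == (tl a \in Y)))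
      (a :: t).
Proof.
elim: t a => [|a' t IH] a /=; rewrite negb_or arc_crosses negbK.
  by rewrite eqxx eq_sym andbT => _ /andP[].
case/andP => /eqP hd_a walk_t /andP[/eqP side_a no_cross].
by have := IH a' walk_t no_cross; rewrite /= -hd_a -side_a !eqxx.
Qed.

Lemma circuit_avoids b c : circuit ends c -> hits ends b c -> b \notin Y ->
  uses (delta ends Y) c = 0 -> uses (incident ends Y) c = 0.
Proof.
case: c => [|a t] // /andP[/andP[_ walk_t] _] hits_b bY no_cross.
have /allP one_side : all (fun x => ((tl x \in Y) == (tl a \in Y)) &&
                                    ((hd x \in Y) == (tl a \in Y))) (a :: t).
  by apply: walk_one_side; rewrite // has_count; move: no_cross; rewrite /uses => ->.
have aY : (tl a \in Y) = false.
  apply/negbTE; case/hasP: hits_b => x xc.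
  have /andP[/eqP tl_x /eqP hd_x] := one_side x xc.
  by case/orP => /eqP bx; move: bY; rewrite -bx ?tl_x ?hd_x.
apply/eqP; rewrite -leqn0 leqNgt -has_count; apply/hasPn => x xc.
by rewrite arc_incident; have /andP[/eqP -> /eqP ->] := one_side x xc; rewrite aY.
Qed.

End Crossings.

Section Credits.
Variables (V E : finType) (ends : E -> V * V) (g : signature E) (b : V).

Definition crossings (Y : {set V}) c := uses (delta ends Y) c.
Definition heavy (Y : {set V}) c := uses [set e in incident ends Y | g e == 1%R] c.
Definition mismatch (Y : {set V}) c : bool :=
  odd (heavy Y c) != odd (crossings Y c)./2.
Definition credit (Y : {set V}) c := (crossings Y c)./2 - mismatch Y c.

Lemma crossings_even Y c : circuit ends c -> ~~ odd (crossings Y c).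
Proof.
move=> circ_c; have := circuit_ends_even (fun u => (u \in Y) : nat) circ_c.
rewrite (eq_bigr (fun x => (x.1 \in delta ends Y) + ((x.1 \in Ein ends Y) +
                                                      (x.1 \in Ein ends Y)))).
  by rewrite !big_split /= -!count_sum addnn oddD odd_double addbF.
by move=> x _; rewrite !inE; case: ((ends x.1).1 \in Y); case: ((ends x.1).2 \in Y).
Qed.

Section ThroughB.
Variables (Y : {set V}) (c : seq (Defs.arc E)).
Hypotheses (circ_c : circuit ends c) (hits_b : hits ends b c) (bY : b \notin Y).

Lemma mismatch_le_half : mismatch Y c <= (crossings Y c)./2.
Proof.
have := crossings_even Y circ_c; case: (posnP (crossings Y c)) => [cr0 _|]; last lia.
have heavy0 : heavy Y c = 0.
  apply/eqP; rewrite -leqn0 -(circuit_avoids circ_c hits_b bY cr0).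
  by apply: sub_count => x; rewrite inE => /andP[].
by rewrite /mismatch heavy0 cr0.
Qed.

Lemma odd_credit : odd (credit Y c) = odd (heavy Y c).
Proof.
rewrite /credit oddB ?mismatch_le_half // /mismatch.
by case: (odd (heavy Y c)); case: (odd (crossings Y c)./2).
Qed.

End ThroughB.

Section Decomposition.
Variable D : seq (seq (Defs.arc E)).
Hypothesis D_circuits : forall c, c \in D -> circuit ends c && hits ends b c.
Hypothesis D_partition : forall e, count (fun c => e \in map fst c) D = 1.

Lemma D_uniq c : c \in D -> uniq (map fst c).
Proof. by case/D_circuits/andP => /andP[/andP[]]. Qed.

Lemma component_bound (Y : {set V}) : b \notin Y ->
  \sum_(c <- D) credit Y c + odd_set ends g Y <= #|delta ends Y|./2.
Proof.
move=> bY.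
have half_crossings : \sum_(c <- D) (crossings Y c)./2 = #|delta ends Y|./2.
  rewrite -(decomp_uses (delta ends Y) D_uniq D_partition).
  rewrite [in RHS]big_seq half_sum -?big_seq //.
  by move=> c /D_circuits/andP[circ_c _]; apply: crossings_even.
have sum_heavy : \sum_(c <- D) heavy Y c = gcount g (incident ends Y).
  exact: decomp_uses D_uniq D_partition.
have mismatch_le c : c \in D -> mismatch Y c <= (crossings Y c)./2.
  by case/D_circuits/andP => circ_c hits_c; apply: mismatch_le_half.
have sum_credit : \sum_(c <- D) credit Y c =
    #|delta ends Y|./2 - \sum_(c <- D) (mismatch Y c : nat).
  by rewrite -half_crossings !big_seq -sumnB.
have mismatch_total : \sum_(c <- D) (mismatch Y c : nat) <= #|delta ends Y|./2.
  by rewrite -half_crossings !big_seq leq_sum.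
have odd_mismatch : odd (\sum_(c <- D) (mismatch Y c : nat)) = odd_set ends g Y.
  by rewrite odd_sum_mismatch sum_heavy half_crossings /odd_set -incident_Ein_delta.
have : odd (\sum_(c <- D) (mismatch Y c : nat)) <= \sum_(c <- D) (mismatch Y c : nat).
  lia.
rewrite odd_mismatch sum_credit; lia.
Qed.

End Decomposition.

End Credits.

Section Bound.
Variables (V E : finType) (ends : E -> V * V) (g : signature E) (b : V) (X : {set V}).
Hypothesis bX : b \in X.
Local Notation comps := (comps ends X).

Lemma odd_comp_sum : odd_comp ends g X = \sum_(Y in comps) odd_set ends g Y.
Proof.
rewrite /odd_comp card_indicator [RHS]big_mkcond; apply: eq_bigr => Y _.
by rewrite !inE; case: (component_minus ends X Y).
Qed.

Lemma comps_notb (Y : {set V}) : Y \in comps -> b \notin Y.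
Proof. by move=> YC; apply: contraL bX => /(comps_notX YC). Qed.

(* A non-zero circuit through b earns a positive credit: the parity of its
   weight-1 edges inside X plus the credits at the components is odd. *)
Lemma circuit_credit_pos c : circuit ends c -> weight g c != 0%R -> hits ends b c ->
  0 < uses [set e in Ein ends X | g e == 1%R] c + \sum_(Y in comps) credit ends g Y c.
Proof.
move=> circ_c w_c hits_c.
have odd_credits : odd (\sum_(Y in comps) credit ends g Y c) =
                   odd (\sum_(Y in comps) heavy ends g Y c).
  by apply: eq_odd_sum => Y YC; rewrite (odd_credit _ circ_c hits_c) ?comps_notb.
move: w_c; rewrite weight_neq0 (@count_split _ _ ends X (fun e => g e == 1%R)).
rewrite oddD -odd_credits -oddD.
by case: (_ + _).
Qed.

Lemma decomposition_bound (D : seq (seq (Defs.arc E))) :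
  (forall c, c \in D -> [/\ circuit ends c, weight g c != 0%R & hits ends b c]) ->
  (forall e, count (fun c => e \in map fst c) D = 1) ->
  size D + odd_comp ends g X <= gcount g (Ein ends X) + #|delta ends X|./2.
Proof.
move=> D_nonzero D_partition.
have D_circuits c : c \in D -> circuit ends c && hits ends b c.
  by case/D_nonzero => -> _ ->.
have size_D : size D <= \sum_(c <- D) (uses [set e in Ein ends X | g e == 1%R] c +
                                      \sum_(Y in comps) credit ends g Y c).
  rewrite -sum1_size !big_seq leq_sum // => c /D_nonzero[circ_c w_c hits_c].
  exact: circuit_credit_pos.
have per_comp : \sum_(Y in comps) (\sum_(c <- D) credit ends g Y c + odd_set ends g Y)
                <= #|delta ends X|./2.
  rewrite -sum_card_delta (leq_trans _ (sum_half_le _ _ _)) // leq_sum // => Y YC.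
  by rewrite (component_bound g D_circuits D_partition) ?comps_notb.
have inside_X : \sum_(c <- D) uses [set e in Ein ends X | g e == 1%R] c =
                gcount g (Ein ends X).
  exact: decomp_uses (D_uniq D_circuits) D_partition.
have swap : \sum_(c <- D) \sum_(Y in comps) credit ends g Y c =
            \sum_(Y in comps) \sum_(c <- D) credit ends g Y c.
  exact: exchange_big.
rewrite big_split /= inside_X swap in size_D.
rewrite big_split /= -odd_comp_sum in per_comp.
by rewrite (leq_trans (leq_add size_D (leqnn _))) // -addnA leq_add2l.
Qed.

(* In an Eulerian graph every component of G - X is left by a positive even
   number of edges, so the odd components are at most half the cut. *)
Lemma odd_comp_le_half : eulerian ends -> odd_comp ends g X <= #|delta ends X|./2.
Proof.
case=> conn even_deg; rewrite odd_comp_sum -sum_card_delta.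
rewrite (leq_trans _ (sum_half_le _ _ _)) // leq_sum // => Y YC.
have [u _ Y_def] := comps_comp YC.
have uY : u \in Y by rewrite Y_def comp_self.
have := connected_delta_pos conn uY (comps_notb YC).
have := delta_even Y even_deg; lia.
Qed.

End Bound.

Theorem mainTheorem2 (V E : finType) (ends : E -> V * V)
  (g g' : signature E) (b : V) (X : {set V}) :
  eulerian ends -> is_shifting ends g g' -> b \in X ->
  ((flooding_number ends g b)%:Z <=
     (gcount g' (Ein ends X))%:Z + (#|delta ends X| ./2)%:Z
     - (odd_comp ends g' X)%:Z)%R.
Proof.
move=> eul shift_g bX.
have odd_le := odd_comp_le_half g' bX eul.
suff : flooding_number ends g b <=
       gcount g' (Ein ends X) + #|delta ends X|./2 - odd_comp ends g' X by lia.
apply/bigmax_leqP => /= k; rewrite /pbool; case: excluded_middle_informative => //.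
move=> [D [[D_nonzero D_partition] size_D]] _; rewrite -size_D.
suff : size D + odd_comp ends g' X <= gcount g' (Ein ends X) + #|delta ends X|./2.
  by lia.
apply: (decomposition_bound bX) => // c /D_nonzero[circ_c w_c hits_c].
by rewrite (shifting_weight shift_g circ_c).
Qed.
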